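(* Let $(X,\mathcal R,\mu)$ be a measure space, i.e. $X$ is a set, $\mathcal R$ is a covering ring of $X$ and $\mu:\mathcal R\to\mathbf K$ is a measure. Then there exist a Hausdorff zero-dimensional space $(Y,\tau_{\mathcal G})$, whose topology $\tau_{\mathcal G}$ has as a base a covering ring $\mathcal G$ of $Y$ with $\mathcal G=\pi(\mathcal R)$, and a quotient mapping $\pi:X\to Y$, such that $\nu:=\pi(\mu)$ is a measure on $(Y,\mathcal G)$, i.e. $(Y,\mathcal G,\nu)$ is a measure space.
   Context: $\mathbf K$ is a field with a nontrivial non-Archimedean valuation $|\cdot|$, $\mathbf K\supset\mathbf Q_p$, complete as an ultrametric space. A covering ring $\mathcal R$ of a set $X$ is a family of subsets of $X$ closed under finite unions, finite intersections and set differences, whose union is $X$. A subfamily $\mathcal S\subset\mathcal R$ is shrinking if for all $A,B\in\mathcal S$ there is $C\in\mathcal S$ with $C\subset A\cap B$; for $f:\mathcal R\to\mathbf K$, $\lim_{A\in\mathcal S}f(A)=0$ means that for each $\epsilon>0$ there is $B\in\mathcal S$ with $|f(A)|\le\epsilon$ for all $A\in\mathcal S$ with $A\subset B$. A measure $\mu:\mathcal R\to\mathbf K$ is a map such that (i) $\mu(A\cup B)=\mu(A)+\mu(B)$ for disjoint $A,B\in\mathcal R$; (ii) $\|A\|_\mu:=\sup\{|\mu(B)|:B\in\mathcal R,B\subset A\}<\infty$ for each $A\in\mathcal R$; (iii) $\lim_{A\in\mathcal S}\mu(A)=0$ for every shrinking $\mathcal S\subset\mathcal R$ with $\bigcap_{S\in\mathcal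 S}S=\emptyset$. A covering ring $\mathcal R$ defines on $X$ the topology $\tau_{\mathcal R}$ with base $\mathcal R$ (all elements of $\mathcal R$ are clopen); a space is zero-dimensional if it has a base of clopen sets. If $\pi:X\to Y$ satisfies $\pi^{-1}(\mathcal G)\subset\mathcal R$, the image measure is $\pi(\mu)(A):=\mu(\pi^{-1}(A))$ for $A\in\mathcal G$. *)

From HB Require Import structures.
From mathcomp Require Import all_boot all_order all_algebra.
From mathcomp Require Import boolp classical_sets reals.
Set Implicit Arguments. Unset Strict Implicit. Unset Printing Implicit Defensive.
Import Order.TTheory GRing.Theory Num.Theory.
Local Open Scope classical_set_scope.
Local Open Scope ring_scope.

(** ** The base field K : a field with an absolute value [v : K -> R] (R the
    real numbers) which is non-Archimedean (ultrametric), nontrivial,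
    complete, and such that K contains Q_p (characteristic 0 and the
    restriction of [v] to Q is the p-adic absolute value up to equivalence,
    i.e. |p| < 1 for a prime p). *)
Definition nonarch_valued_field_over_Qp (R : realType) (K : fieldType)
    (v : K -> R) : Prop :=
  ((forall x, 0 <= v x) /\ (forall x, v x = 0 <-> x = 0)) /\
  (forall x y, v (x * y) = v x * v y) /\
  (forall x y, v (x + y) <= Num.max (v x) (v y)) /\
  (exists x, v x <> 0 /\ v x <> 1) /\
  (forall u : nat -> K,
     (forall e, 0 < e -> exists N, forall m n, (N <= m)%N -> (N <= n)%N ->
         v (u m - u n) < e) ->
     exists l, forall e, 0 < e -> exists N, forall n, (N <= n)%N ->
         v (u n - l) < e) /\
  [pchar K] =i pred0 /\
  (exists p, prime p /\ v (p%:R) < 1).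

Definition covering_ring (X : Type) (Rg : set (set X)) : Prop :=
  [/\ (forall A B, Rg A -> Rg B -> Rg (A `|` B)),
      (forall A B, Rg A -> Rg B -> Rg (A `&` B)),
      (forall A B, Rg A -> Rg B -> Rg (A `\` B))
    & \bigcup_(A in Rg) A = [set: X]].

Definition shrinking (X : Type) (Rg S : set (set X)) : Prop :=
  [/\ S `<=` Rg, S !=set0
    & forall A B, S A -> S B -> exists C, S C /\ C `<=` A `&` B].

Definition lim0_along (R : realType) (K : fieldType) (v : K -> R)
    (X : Type) (S : set (set X)) (f : set X -> K) : Prop :=
  forall e : R, 0 < e -> exists B, S B /\
    forall A, S A -> A `<=` B -> v (f A) <= e.

(** A measure mu : Rg -> K (values of mu outside Rg are irrelevant). *)
Definition is_measure (R : realType) (K : fieldType) (v : K -> R)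
    (X : Type) (Rg : set (set X)) (mu : set X -> K) : Prop :=
  [/\ (forall A B, Rg A -> Rg B -> A `&` B = set0 -> mu (A `|` B) = mu A + mu B),
      (forall A, Rg A -> exists M : R, forall B, Rg B -> B `<=` A -> v (mu B) <= M)
    & (forall S, shrinking Rg S -> \bigcap_(A in S) A = set0 ->
         lim0_along v S mu)].

Definition open_in_base (Y : Type) (B : set (set Y)) (U : set Y) : Prop :=
  forall y, U y -> exists A, B A /\ A y /\ A `<=` U.

Definition hausdorff_base (Y : Type) (B : set (set Y)) : Prop :=
  forall x y, x <> y -> exists U V, open_in_base B U /\ open_in_base B V /\
    U x /\ V y /\ U `&` V = set0.

Definition zero_dim_base (Y : Type) (B : set (set Y)) : Prop :=
  exists C : set (set Y),
    (forall A, C A -> open_in_base B A /\ open_in_base B (~` A)) /\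
    (forall U, open_in_base B U -> forall y, U y -> exists A, C A /\ A y /\ A `<=` U).

Definition quotient_map (X Y : Type) (RX : set (set X)) (BY : set (set Y))
    (pi : X -> Y) : Prop :=
  (forall y : Y, exists x : X, pi x = y) /\
  forall V : set Y, open_in_base BY V <-> open_in_base RX (pi @^-1` V).

Definition image_measure (K : Type) (X Y : Type) (pi : X -> Y)
    (mu : set X -> K) : set Y -> K := fun A => mu (pi @^-1` A).

From HB Require Import structures.
From mathcomp Require Import all_boot all_order all_algebra.
From mathcomp Require Import boolp classical_sets reals.
Set Implicit Arguments. Unset Strict Implicit. Unset Printing Implicit Defensive.
Local Open Scope classical_set_scope.
Local Open Scope ring_scope.

(* Identify two points of X when no set of the ring separates them, i.e. take
   for Y the set of traces {A in R | x in A}.  Every set of the ring is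
   saturated for this relation, so the ring passes isomorphically to Y, where
   it becomes a covering ring that separates points; such a ring is a base of
   clopen sets of a Hausdorff topology.  Measures only see the ring, so the
   image of mu is again a measure.  No property of the valued field is used. *)

Section ImageMeasure.
Variables (R : realType) (K : fieldType) (v : K -> R).
Variables (X Y : Type) (Rg : set (set X)) (G : set (set Y)) (pi : X -> Y).
Hypothesis G_preimage : forall B, G B -> Rg (pi @^-1` B).

Lemma shrinking_preimage (S : set (set Y)) : shrinking G S ->
  shrinking Rg [set pi @^-1` B | B in S].
Proof.
case=> SG [B0 SB0] Sdir; split.
- by move=> _ [B SB <-]; exact/G_preimage/SG.
- by exists (pi @^-1` B0), B0.
- move=> _ _ [B1 SB1 <-] [B2 SB2 <-].
  have [C [SC CB]] := Sdir _ _ SB1 SB2.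
  by exists (pi @^-1` C); split; [exists C | move=> x /CB].
Qed.

Lemma bigcap_preimage0 (S : set (set Y)) : \bigcap_(B in S) B = set0 ->
  \bigcap_(A in [set pi @^-1` B | B in S]) A = set0.
Proof.
move=> S0; apply/seteqP; split => // x Sx.
have : (\bigcap_(B in S) B) (pi x) by move=> B SB; apply: (Sx (pi @^-1` B)); exists B.
by rewrite S0.
Qed.

Lemma is_measure_image (mu : set X -> K) :
  is_measure v Rg mu -> is_measure v G (image_measure pi mu).
Proof.
case=> madd mbd mlim; rewrite /image_measure; split.
- move=> A B /G_preimage RA /G_preimage RB AB.
  by rewrite preimage_setU madd // -preimage_setI AB preimage_set0.
- move=> A GA; have [M HM] := mbd _ (G_preimage GA).
  by exists M => B GB BA; apply: HM; [exact: G_preimage | move=> x /BA].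
- move=> S shS S0 e e_gt0.
  have [_ [[B SB <-] HB]] :=
    mlim _ (shrinking_preimage shS) (bigcap_preimage0 S0) e e_gt0.
  exists B; split => // A SA AB; apply: HB; first by exists A.
  by move=> x /AB.
Qed.

End ImageMeasure.

Section CoveringRingTopology.
Variables (Y : Type) (G : set (set Y)).
Hypothesis hG : covering_ring G.

Lemma covering_ring_cover (y : Y) : exists A, G A /\ A y.
Proof.
case: hG => _ _ _ cov; have : [set: Y] y by [].
by rewrite -cov => -[A GA Ay]; exists A.
Qed.

Lemma open_in_base_ring (A : set Y) : G A -> open_in_base G A.
Proof. by move=> GA y Ay; exists A; do !split. Qed.

Lemma open_in_base_ringC (A : set Y) : G A -> open_in_base G (~` A).
Proof.
case: hG => _ _ hD _ GA y nAy; have [B [GB By]] := covering_ring_cover y.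
by exists (B `\` A); split; [exact: hD | split => // z []].
Qed.

Lemma covering_ring_zero_dim : zero_dim_base G.
Proof.
exists G; split.
  by move=> A GA; split; [exact: open_in_base_ring | exact: open_in_base_ringC].
by move=> U oU y /oU.
Qed.

Lemma ring_separated (A : set Y) (y1 y2 : Y) : G A -> A y1 -> ~ A y2 ->
  exists U V, open_in_base G U /\ open_in_base G V /\
    U y1 /\ V y2 /\ U `&` V = set0.
Proof.
move=> GA Ay1 nAy2; exists A, (~` A); do !split => //.
- exact: open_in_base_ring.
- exact: open_in_base_ringC.
- by rewrite setICr.
Qed.

Lemma covering_ring_hausdorff :
  (forall y1 y2, y1 <> y2 -> exists A, G A /\ ~ (A y1 <-> A y2)) ->
  hausdorff_base G.
Proof.
move=> sepG y1 y2 /sepG [A [GA nAiff]].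
have [Ay1|nAy1] := pselect (A y1).
  by apply: (ring_separated GA Ay1) => Ay2; apply: nAiff.
have Ay2 : A y2 by apply: contra_notP nAiff => nAy2; split.
have [U [V [oU [oV [Uy2 [Vy1 UV]]]]]] := ring_separated GA Ay2 nAy1.
by exists V, U; do !split => //; rewrite setIC.
Qed.

End CoveringRingTopology.

Section RingQuotient.
Variables (X : Type) (Rg : set (set X)).
Hypothesis hR : covering_ring Rg.

Definition ring_trace (x : X) : set (set X) := [set A | Rg A /\ A x].

Definition ring_quotient : Type := {S : set (set X) | exists x, S = ring_trace x}.

Definition ring_quot (x : X) : ring_quotient :=
  exist _ (ring_trace x) (ex_intro _ x erefl).

Definition quotient_ring : set (set ring_quotient) := [set ring_quot @` A | A in Rg].

Lemma ring_quot_surj (y : ring_quotient) : exists x, ring_quot x = y.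
Proof. by case: y => S [x Sx]; exists x; apply: eq_exist. Qed.

Lemma ring_quot_saturated (A : set X) (a b : X) :
  Rg A -> ring_quot a = ring_quot b -> A a -> A b.
Proof.
move=> RA /(congr1 sval) /= eab Aa.
have : ring_trace a A by [].
by rewrite eab => -[].
Qed.

Lemma ring_quot_eq (a b : X) :
  (forall A, Rg A -> (A a <-> A b)) -> ring_quot a = ring_quot b.
Proof.
move=> same; apply: eq_exist.
by apply/seteqP; split => A [RA HA]; split => //; apply/(same A RA).
Qed.

Lemma preimage_image_ring_quot (A : set X) :
  Rg A -> ring_quot @^-1` (ring_quot @` A) = A.
Proof.
move=> RA; apply/seteqP; split => x //=.
- by case=> a Aa /ring_quot_saturated; apply.
- by move=> Ax; exists x.
Qed.

Lemma quotient_ring_preimage (B : set ring_quotient) :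
  quotient_ring B -> Rg (ring_quot @^-1` B).
Proof. by move=> [A RA <-]; rewrite preimage_image_ring_quot. Qed.

Lemma quotient_covering_ring : covering_ring quotient_ring.
Proof.
have imgE (V : set ring_quotient) : V = ring_quot @` (ring_quot @^-1` V).
  rewrite image_preimage //; apply/seteqP; split => // y _.
  by have [x <-] := ring_quot_surj y; exists x.
have [hU hI hD cov] := hR; split.
- move=> _ _ [A RA <-] [B RB <-]; exists (A `|` B); first exact: hU.
  by rewrite image_setU.
- move=> _ _ [A RA <-] [B RB <-]; exists (A `&` B); first exact: hI.
  by rewrite [RHS]imgE preimage_setI !preimage_image_ring_quot.
- move=> _ _ [A RA <-] [B RB <-]; exists (A `\` B); first exact: hD.
  by rewrite [RHS]imgE !setDE preimage_setI -preimage_setC !preimage_image_ring_quot.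
- apply/seteqP; split => // y _; have [x <-] := ring_quot_surj y.
  have [A [RA Ax]] := covering_ring_cover hR x.
  by exists (ring_quot @` A); [exists A | exists x].
Qed.

Lemma quotient_ring_separates (y1 y2 : ring_quotient) : y1 <> y2 ->
  exists B, quotient_ring B /\ ~ (B y1 <-> B y2).
Proof.
have [a <-] := ring_quot_surj y1; have [b <-] := ring_quot_surj y2.
move=> neq; apply: contra_notP neq => nsep; apply: ring_quot_eq => A RA.
apply: contra_notP nsep => nAiff; exists (ring_quot @` A); split; first by exists A.
by rewrite -(preimage_image_ring_quot RA) in nAiff.
Qed.

Lemma ring_quot_quotient_map : quotient_map Rg quotient_ring ring_quot.
Proof.
split; first exact: ring_quot_surj.
move=> V; split.
- move=> oV x Vx; have [_ [[A RA <-] [Ax AV]]] := oV (ring_quot x) Vx.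
  exists A; split => //; split; first by rewrite -(preimage_image_ring_quot RA).
  by move=> z Az; apply: AV; exists z.
- move=> oV y Vy; have [x ex] := ring_quot_surj y; subst y.
  have [A [RA [Ax AV]]] := oV x Vy.
  exists (ring_quot @` A); split; first by exists A.
  by split; [exists x | move=> _ [z Az <-]; apply: AV].
Qed.

End RingQuotient.

Theorem proposition2p6 (R : realType) (K : fieldType) (v : K -> R)
    (hK : nonarch_valued_field_over_Qp v)
    (X : Type) (Rg : set (set X)) (mu : set X -> K)
    (hR : covering_ring Rg) (hmu : is_measure v Rg mu) :
  exists (Y : Type) (G : set (set Y)) (pi : X -> Y),
    covering_ring G /\
    G = [set pi @` A | A in Rg] /\
    (forall B, G B -> Rg (pi @^-1` B)) /\
    hausdorff_base G /\
    zero_dim_base G /\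
    quotient_map Rg G pi /\
    is_measure v G (image_measure pi mu).
Proof.
have hG := quotient_covering_ring hR.
exists (ring_quotient Rg), (@quotient_ring _ Rg), (ring_quot Rg).
split; first exact: hG.
split; first by [].
split; first exact: quotient_ring_preimage.
split; first exact/covering_ring_hausdorff/quotient_ring_separates.
split; first exact: covering_ring_zero_dim.
split; first exact: ring_quot_quotient_map.
by apply: (is_measure_image _ hmu) => B; apply: quotient_ring_preimage.
Qed.
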